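(* Let $G$ be a graph of girth at least $6$ having exactly one vertex $x$ of type $2$ and no vertex of type $k$ for any $k\geq 3$. Then $G$ is almost well-covered if and only if every internal vertex of $G$ other than $x$ is of type $0$ or $1$, $N(x)\cap V(G_0)=\emptyset$, $G_0$ is well-covered, and for every independent set $I$ in $G_1$ the following hold: (a) $\alpha(G_0)=i(G_0-N(I))$ if $I\cap N(x)=\emptyset$, and (b) $\alpha(G_0)-i(G_0-N(I))\leq 1$ if $I\cap N(x)\neq\emptyset$.
   Context: All graphs are finite and simple. The girth of a graph is the length of a shortest cycle (infinite for acyclic graphs). For a graph $H$, $\alpha(H)$ is the maximum size of an independent set and $i(H)$ is the minimum size of an inclusion-maximal independent set (both $0$ for the null graph). $H$ is well-covered if $\alpha(H)=i(H)$ and almost well-covered if $\alpha(H)-i(H)=1$. $N(v)$ is the neighborhood of $v$, $N(I)=\bigcup_{v\in I}N(v)$, and $G_0-N(I)$ denotes the graph obtained from $G_0$ by deleting the vertices of $N(I)$. Types of vertices: let $U$ be the set of vertices of $G$ whose connected component is a complete graph. In $G-U$, vertices of degree $1$ are leaves and the others are internal vertices. An internal vertex adjacent to exactly $k$ leaves is of type $k$; every vertex of $U$ is of type $0$. $G_i$ denotes the subgraph of $G$ induced by all vertices of type $i$. *)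

(* A finite simple graph is a symmetric irreflexive relation
   e on a finite vertex type T. Subgraphs are induced subgraphs given by
   vertex sets S : {set T}. *)
From mathcomp Require Import all_boot.
Set Implicit Arguments. Unset Strict Implicit. Unset Printing Implicit Defensive.

Section Graphs.
Variables (T : finType) (e : rel T).

Definition simple_graph := symmetric e /\ irreflexive e.

Definition girth_ge6 :=
  forall s : seq T, uniq s -> cycle e s -> 3 <= size s -> 6 <= size s.

Definition independent (I : {set T}) :=
  [forall u in I, forall v in I, ~~ e u v].

Definition indep_in (S I : {set T}) := (I \subset S) && independent I.

Definition maximal_indep_in (S I : {set T}) :=
  indep_in S I && [forall v in S :\: I, exists u in I, e u v].

Definition alpha (S : {set T}) : nat :=
  \max_(I : {set T} | indep_in S I) #|I|.

(* i(G[S]) : minimum size of a maximal independent set (one always exists,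
   and each has size <= #|T|, so the default #|T| is never the answer
   except when it is attained). *)
Definition imin (S : {set T}) : nat :=
  \big[minn/#|T|]_(I : {set T} | maximal_indep_in S I) #|I|.

Definition well_covered (S : {set T}) := alpha S = imin S.
Definition almost_well_covered (S : {set T}) := alpha S - imin S = 1.

(* U: vertices whose connected component is a complete graph *)
Definition Uset : {set T} :=
  [set v | [forall u, forall w,
      (connect e v u && connect e v w && (u != w)) ==> e u w]].

Definition degGU (v : T) : nat := #|[set u | e v u & u \notin Uset]|.

Definition is_leaf (v : T) := (v \notin Uset) && (degGU v == 1).
Definition is_internal (v : T) := (v \notin Uset) && (degGU v != 1).

Definition nleaves (v : T) : nat := #|[set u | e v u & is_leaf u]|.

Definition is_type (k : nat) (v : T) :=
  ((v \in Uset) && (k == 0)) || (is_internal v && (nleaves v == k)).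

Definition Vtype (k : nat) : {set T} := [set v | is_type k v].

Definition nbhd (v : T) : {set T} := [set u | e v u].
Definition nbhd_set (I : {set T}) : {set T} := [set u | [exists v in I, e v u]].

End Graphs.

From mathcomp Require Import all_boot zify.
Set Implicit Arguments. Unset Strict Implicit. Unset Printing Implicit Defensive.

(* Every vertex is of type 0, of type 1, equal to x, or a leaf; each type-1 vertex carries
   one leaf, x carries two and type-0 vertices carry none.  Counting an independent set
   J on G_0, on the type-1 vertices with their leaves, and on x with its leaves gives
   |J| <= alpha(G_0) + |G_1| + 2, while for maximal J the last two parts have at least |G_1| and
   (x in J ? 1 : 2) vertices.  These bounds are attained by the maximal independent sets
   I + (leaves of G_1 - I) + ({x} or the leaves of x) + K, with I independent in G_1 and K
   maximal in G_0 - N(I) (- N(x) if x is taken).  Hence i(G) < alpha(G), and G is almost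
   well-covered iff every maximal independent set has at least alpha(G_0) + |G_1| + 1 vertices,
   which on these sets reads (a) and (b).  If a type-0 vertex v were adjacent to x, girth >= 6
   would make the second neighbours of v through G_0 independent and non-adjacent to x, and
   completing them by (a) gives an independent set of G_0 of size alpha(G_0) to which v can
   still be added. *)

Lemma bigminn_le_seq (I : eqType) (r : seq I) (P : pred I) (F : I -> nat) d i :
  i \in r -> P i -> \big[minn/d]_(j <- r | P j) F j <= F i.
Proof.
elim: r => // a r IHr; rewrite inE big_cons => /predU1P[-> -> | ir Pi].
  exact: geq_minl.
by case: (P a); [apply: leq_trans (geq_minr _ _) _|]; apply: IHr.
Qed.

Lemma cardsU_disjoint (T : finType) (A B : {set T}) :
  {in A, forall u, u \notin B} -> #|A :|: B| = #|A| + #|B|.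
Proof.
move=> AnB; rewrite cardsU; suff -> : A :&: B = set0 by rewrite cards0 subn0.
by apply/setP => u; rewrite !inE; apply/negP => /andP[/AnB/negP].
Qed.

Section IndependentSets.
Variables (T : finType) (e : rel T).
Hypotheses (e_sym : symmetric e) (e_irr : irreflexive e).

Lemma edge_neq u v : e u v -> u != v.
Proof. by apply: contraTneq => ->; rewrite e_irr. Qed.

Lemma independentP (I : {set T}) :
  reflect {in I &, forall u v, ~~ e u v} (independent e I).
Proof.
apply: (iffP forall_inP) => [indI u v uI vI | indI u uI].
  exact: (forall_inP (indI u uI)).
by apply/forall_inP => v; apply: indI.
Qed.

Lemma independentS (A B : {set T}) :
  A \subset B -> independent e B -> independent e A.
Proof.
move=> /subsetP AB /independentP indB.
by apply/independentP => u v /AB uB /AB; apply: indB.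
Qed.

Lemma indep_in0 (S : {set T}) : indep_in e S set0.
Proof. by rewrite /indep_in sub0set; apply/independentP => u v; rewrite inE. Qed.

Lemma indep_inI (S J : {set T}) : independent e J -> indep_in e S (J :&: S).
Proof. by move=> indJ; rewrite /indep_in subsetIr (independentS (subsetIl _ _) indJ). Qed.

Lemma indep_inU1 (S K : {set T}) v : indep_in e S K -> v \in S ->
  {in K, forall u, ~~ e u v} -> indep_in e S (v |: K).
Proof.
case/andP=> KS /independentP indK vS vK; rewrite /indep_in subUset sub1set vS KS /=.
apply/independentP => a b; rewrite !in_setU1.
case/predU1P=> [->|aK] /predU1P[->|bK]; rewrite ?e_irr ?vK //.
- by rewrite e_sym vK.
- exact: indK.
Qed.

Lemma card_le_alpha (S K : {set T}) : indep_in e S K -> #|K| <= alpha e S.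
Proof. exact: leq_bigmax_cond. Qed.

Lemma alpha_le_cardT (S : {set T}) : alpha e S <= #|T|.
Proof. by apply/bigmax_leqP => K _; apply: max_card. Qed.

Lemma alphaS (S S' : {set T}) : S \subset S' -> alpha e S <= alpha e S'.
Proof.
move=> SS'; apply/bigmax_leqP => K /andP[KS indK]; apply: card_le_alpha.
by rewrite /indep_in indK (subset_trans KS SS').
Qed.

Lemma alpha_witness (S : {set T}) : exists2 K, indep_in e S K & #|K| = alpha e S.
Proof.
case: (arg_maxnP (fun K : {set T} => #|K|) (indep_in0 S)) => K indK maxK.
by exists K => //; apply/eqP; rewrite eqn_leq card_le_alpha //=; apply/bigmax_leqP.
Qed.

Lemma maximal_of_card_max (S K : {set T}) : indep_in e S K ->
  (forall K', indep_in e S K' -> K \subset K' -> #|K'| <= #|K|) ->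
  maximal_indep_in e S K.
Proof.
move=> indK maxK; rewrite /maximal_indep_in indK; apply/forall_inP => v.
rewrite in_setD => /andP[vK vS]; apply: contraT; rewrite negb_exists_in => /forall_inP nvK.
have := maxK _ (indep_inU1 indK vS nvK) (subsetUr _ _).
by rewrite cardsU1 vK ltnn.
Qed.

Lemma maximum_indep_maximal (S K : {set T}) :
  indep_in e S K -> alpha e S <= #|K| -> maximal_indep_in e S K.
Proof.
move=> indK alphaK; apply: maximal_of_card_max => // K' indK' _.
exact: leq_trans (card_le_alpha indK') alphaK.
Qed.

Lemma maximal_indep_in_superset (S A : {set T}) : indep_in e S A ->
  exists2 K, maximal_indep_in e S K & A \subset K.
Proof.
move=> indA; have indAA : indep_in e S A && (A \subset A) by rewrite indA subxx.
have [K /andP[indK AK] maxK] :=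
  @arg_maxnP _ A (fun K => indep_in e S K && (A \subset K)) (fun K => #|K|) indAA.
exists K => //; apply: maximal_of_card_max => // K' indK' KK'.
by apply: maxK; rewrite indK' (subset_trans AK).
Qed.

Lemma maximal_dominates (S J : {set T}) y : maximal_indep_in e S J ->
  y \in S -> y \notin J -> exists2 u, u \in J & e u y.
Proof.
case/andP=> _ /forall_inP domJ yS yJ.
by apply/exists_inP; apply: domJ; rewrite in_setD yJ.
Qed.

Lemma imin_le_card (S K : {set T}) : maximal_indep_in e S K -> imin e S <= #|K|.
Proof.
exact: (@bigminn_le_seq _ _ (maximal_indep_in e S) (fun K => #|K|) _ _ (mem_index_enum K)).
Qed.

Lemma leq_imin (S : {set T}) n : n <= #|T| ->
  (forall K, maximal_indep_in e S K -> n <= #|K|) -> n <= imin e S.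
Proof.
by move=> nT nK; rewrite /imin; elim/big_ind: _ => // a b na nb; rewrite leq_min na nb.
Qed.

Lemma imin_le_alpha (S : {set T}) : imin e S <= alpha e S.
Proof.
have [K maxK _] := maximal_indep_in_superset (indep_in0 S).
by apply: leq_trans (imin_le_card maxK) (card_le_alpha (andP maxK).1).
Qed.

Lemma nbhd_setP (I : {set T}) y :
  reflect (exists2 v, v \in I & e v y) (y \in nbhd_set e I).
Proof. by rewrite inE; apply: exists_inP. Qed.

Lemma nbhd_set0 : nbhd_set e set0 = set0.
Proof. by apply/setP => y; apply/nbhd_setP; rewrite inE => -[v]; rewrite inE. Qed.

Lemma Uset_edge u v : e u v -> (u \in Uset e) = (v \in Uset e).
Proof.
move=> uv; have connE y : connect e u y = connect e v y.
  apply/idP/idP; apply: connect_trans; last exact: connect1.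
  by rewrite (sym_connect_sym e_sym) connect1.
by rewrite !inE; apply: eq_forallb => a; apply: eq_forallb => b; rewrite !connE.
Qed.

Lemma degGU_nbhd v : v \notin Uset e -> degGU e v = #|nbhd e v|.
Proof.
move=> vU; apply: eq_card => w; rewrite [RHS]in_set [LHS]in_set.
by case vw: (e v w); rewrite //= -(Uset_edge vw).
Qed.

End IndependentSets.

Section ShortCycles.
Variables (T : finType) (e : rel T).
Hypotheses (e_irr : irreflexive e) (e_girth : girth_ge6 e).

Lemma no_short_cycle (s : seq T) : uniq s -> cycle e s -> 3 <= size s <= 5 -> False.
Proof. by move=> us cs /andP[s3]; rewrite leqNgt => /negP; apply; apply: e_girth. Qed.

Lemma no_triangle a b c : e a b -> e b c -> e c a -> False.
Proof.
move=> ab bc ca; apply: (@no_short_cycle [:: a; b; c]) => //=; last by rewrite ab bc ca.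
by rewrite !inE !negb_or (edge_neq e_irr ab) (edge_neq e_irr bc) eq_sym (edge_neq e_irr ca).
Qed.

Lemma no_4cycle a b c d : e a b -> e b c -> e c d -> e d a -> a != c -> b != d -> False.
Proof.
move=> ab bc cd da ac bd; apply: (@no_short_cycle [:: a; b; c; d]) => //=.
  rewrite !inE !negb_or ac bd (edge_neq e_irr ab) (edge_neq e_irr bc) (edge_neq e_irr cd).
  by rewrite eq_sym (edge_neq e_irr da).
by rewrite ab bc cd da.
Qed.

Lemma no_5cycle a b c d f : e a b -> e b c -> e c d -> e d f -> e f a ->
  a != c -> a != d -> b != d -> b != f -> c != f -> False.
Proof.
move=> ab bc cd df fa ac ad bd bf cf.
apply: (@no_short_cycle [:: a; b; c; d; f]) => //=; last by rewrite ab bc cd df fa.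
rewrite !inE !negb_or ac ad bd bf cf (edge_neq e_irr ab) (edge_neq e_irr bc).
by rewrite (edge_neq e_irr cd) (edge_neq e_irr df) eq_sym (edge_neq e_irr fa).
Qed.

End ShortCycles.

Section TypedVertices.
Variables (T : finType) (e : rel T).
Hypothesis e_sym : symmetric e.

Local Notation U := (Uset e).
Local Notation V0 := (Vtype e 0).
Local Notation V1 := (Vtype e 1).

Definition stem (u : T) : T := odflt u [pick w | e u w].

Definition leaves_at (v : T) : {set T} := [set u | e v u & is_leaf e u].

Lemma is_typeE k v :
  is_type e k v = if v \in U then k == 0 else is_internal e v && (nleaves e v == k).
Proof. by rewrite /is_type /is_internal; case: (v \in U); rewrite /= ?orbF. Qed.

Lemma leaf_adj u y : is_leaf e u -> e u y = (y == stem u).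
Proof.
case/andP=> uU; rewrite degGU_nbhd // => /cards1P[w Nu].
have adjE z : e u z = (z == w) by move/setP/(_ z): Nu; rewrite !inE.
rewrite adjE /stem; case: pickP => [w' | noadj] /=; first by rewrite adjE => /eqP->.
by move: (noadj w); rewrite adjE eqxx.
Qed.

Lemma leaf_stem u : is_leaf e u -> e u (stem u).
Proof. by move=> lu; rewrite leaf_adj. Qed.

(* Two adjacent leaves would form a complete component, i.e. lie in U. *)
Lemma stem_not_leaf u : is_leaf e u -> ~~ is_leaf e (stem u).
Proof.
move=> lu; apply/negP => ls.
have stem2 : stem (stem u) = u by apply/esym/eqP; rewrite -leaf_adj // e_sym leaf_stem.
set A := [set u; stem u].
have closedA : closed e (mem A).
  apply: (intro_closed (sym_connect_sym e_sym)) => a b ab; rewrite !inE.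
  by case/orP=> /eqP Ea; move: ab; rewrite Ea leaf_adj // ?stem2 => ->; rewrite ?orbT.
have inA y : connect e u y -> y \in A by move/(closed_connect closedA) <-; rewrite !inE eqxx.
case/andP: (lu) => /negP[]; rewrite inE; apply/forallP => a; apply/forallP => b.
apply/implyP => /andP[/andP[/inA + /inA]]; rewrite !inE.
case/orP=> /eqP-> /orP[]/eqP->; rewrite ?eqxx //= => _.
  exact: leaf_stem.
by rewrite e_sym leaf_stem.
Qed.

Lemma leaves_atE v u : (u \in leaves_at v) = is_leaf e u && (stem u == v).
Proof.
rewrite inE andbC e_sym; case lu: (is_leaf e u) => //=.
by rewrite leaf_adj // eq_sym.
Qed.

Lemma leaf_untyped k u : is_leaf e u -> ~~ is_type e k u.
Proof. by case/andP=> uU d1; rewrite is_typeE (negbTE uU) /is_internal d1 andbF. Qed.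

Lemma Vtype_not_leaf k v : v \in Vtype e k -> ~~ is_leaf e v.
Proof. by rewrite inE; apply: contraL => /leaf_untyped->. Qed.

Lemma type_uniq k k' v : is_type e k v -> is_type e k' v -> k = k'.
Proof.
by rewrite !is_typeE; case: (v \in U) => [/eqP-> /eqP->|/andP[_ /eqP<-] /andP[_ /eqP]].
Qed.

Lemma V0_notV1 v : v \in V0 -> v \notin V1.
Proof. by rewrite !inE => v0; apply/negP => /(type_uniq v0). Qed.

Lemma V0_leaf_free v u : v \in V0 -> is_leaf e u -> ~~ e v u.
Proof.
move=> v0 lu; apply/negP => vu; move: v0; rewrite inE is_typeE.
case: ifP => vU; first by case/andP: lu; rewrite -(Uset_edge e_sym vu) vU.
by case/andP=> _; rewrite /nleaves cards_eq0 => /eqP/setP/(_ u); rewrite !inE vu lu.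
Qed.

Lemma V1_leaves v : v \in V1 -> exists u, leaves_at v = [set u].
Proof.
rewrite inE is_typeE; case: ifP => // vU /andP[_].
by rewrite /nleaves -/(leaves_at v) => /cards1P.
Qed.

Lemma V1_stem_witness v : v \in V1 -> exists2 u, is_leaf e u & stem u = v.
Proof.
case/V1_leaves => u Lv; have : u \in leaves_at v by rewrite Lv set11.
by rewrite leaves_atE => /andP[lu /eqP]; exists u.
Qed.

Lemma stem_inj_V1 u u' : is_leaf e u -> is_leaf e u' -> stem u = stem u' ->
  stem u \in V1 -> u = u'.
Proof.
move=> lu lu' su /V1_leaves[w Lw].
have : u \in leaves_at (stem u) by rewrite leaves_atE lu eqxx.
have : u' \in leaves_at (stem u) by rewrite leaves_atE lu' su eqxx.
by rewrite Lw !inE => /eqP-> /eqP->.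
Qed.

Lemma maximal_leaf J u : maximal_indep_in e [set: T] J -> is_leaf e u ->
  stem u \notin J -> u \in J.
Proof.
move=> maxJ lu; apply: contraR => uJ.
have [w wJ wu] := maximal_dominates maxJ (in_setT u) uJ.
by move: wu; rewrite e_sym leaf_adj // => /eqP <-.
Qed.

Definition other_nb (v w : T) : T := odflt w [pick z | e w z && (z != v)].

Lemma other_nbP v w : is_internal e w -> e v w ->
  e w (other_nb v w) && (other_nb v w != v).
Proof.
move=> wi vw; rewrite /other_nb; case: pickP => [z -> // | none].
case/andP: wi => wU /negP[]; rewrite degGU_nbhd //; apply/cards1P; exists v.
apply/setP => z; rewrite !inE; apply/idP/eqP => [wz | ->]; last by rewrite e_sym.
by move: (none z); rewrite wz => /negbFE/eqP.
Qed.

Section UniqueType2Vertex.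
Variable x : T.
Hypothesis e_irr : irreflexive e.
Hypotheses (x_type2 : is_type e 2 x) (x_unique : forall y, is_type e 2 y -> y = x).
Hypothesis no_type_ge3 : forall (k : nat) y, 3 <= k -> ~~ is_type e k y.
Hypothesis e_girth : girth_ge6 e.

Lemma x_notVtype k : k != 2 -> x \notin Vtype e k.
Proof. by rewrite inE; apply: contra => /type_uniq/(_ x_type2)->. Qed.

Lemma x_not_leaf : ~~ is_leaf e x.
Proof. by apply: contraL x_type2 => /leaf_untyped->. Qed.

Lemma x_notU : x \notin U.
Proof. by move: x_type2; rewrite is_typeE; case: (x \in U). Qed.

Lemma card_leaves_at_x : #|leaves_at x| = 2.
Proof. by move: x_type2; rewrite is_typeE (negbTE x_notU) => /andP[_ /eqP]. Qed.

Lemma vertex_cases v : [\/ v \in V0, v \in V1, v = x | is_leaf e v].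
Proof.
case: (boolP (is_leaf e v)) => [lv|nl]; first exact: Or44.
case: (boolP (v \in U)) => vU; first by apply: Or41; rewrite inE is_typeE vU.
have vtype : is_type e (nleaves e v) v.
  by rewrite is_typeE (negbTE vU) eqxx andbT /is_internal vU; move: nl; rewrite /is_leaf vU.
case: (ltnP (nleaves e v) 3) => [|ge3]; last by rewrite (negbTE (no_type_ge3 v ge3)) in vtype.
case: (nleaves e v) vtype => [|[|[|//]]] vtype _; rewrite !inE.
- exact: Or41.
- exact: Or42.
- exact/Or43/x_unique.
Qed.

Lemma stem_cases u : is_leaf e u -> stem u \in V1 \/ stem u = x.
Proof.
move=> lu; case: (vertex_cases (stem u)) => [s0|s1|sx|ls]; [|by left|by right|].
- by have := V0_leaf_free s0 lu; rewrite e_sym leaf_stem.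
- by have := stem_not_leaf lu; rewrite ls.
Qed.

Lemma internal_type01 y : is_internal e y -> y != x -> is_type e 0 y \/ is_type e 1 y.
Proof.
move=> yi yx; case: (vertex_cases y); rewrite ?inE; [by left | by right | |].
- by move=> yeq; rewrite yeq eqxx in yx.
- by case/andP: yi => _ /negbTE d1; case/andP=> _; rewrite d1.
Qed.

Definition star_x : {set T} := x |: leaves_at x.

Definition to_stem (u : T) : T := if is_leaf e u then stem u else u.

Lemma in_star_x u : (u \in star_x) = (u == x) || is_leaf e u && (stem u == x).
Proof. by rewrite in_setU1 leaves_atE. Qed.

Lemma V0_notin_star_x v : v \in V0 -> v \notin star_x.
Proof.
move=> v0; rewrite in_star_x (negbTE (Vtype_not_leaf v0)) orbF.
by apply: contraTneq v0 => ->; apply: x_notVtype.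
Qed.

Lemma to_stem_V1 u : u \notin V0 -> u \notin star_x -> to_stem u \in V1.
Proof.
rewrite in_star_x /to_stem; case: (vertex_cases u) => [->|u1|->|lu] //.
- by rewrite (negbTE (Vtype_not_leaf u1)).
- by rewrite eqxx.
- by rewrite lu /=; case: (stem_cases lu) => // ->; rewrite eqxx orbT.
Qed.

Lemma card_split_V0_star (J : {set T}) :
  #|J| = #|J :&: V0| + #|(J :\: V0) :\: star_x| + #|J :&: star_x|.
Proof.
rewrite -(cardsID V0 J) -(cardsID star_x (J :\: V0)).
suff -> : (J :\: V0) :&: star_x = J :&: star_x by lia.
apply/setP => u; rewrite !in_setI in_setD.
by case: (boolP (u \in star_x)) => us; rewrite ?andbF // (contraTN (@V0_notin_star_x u) us).
Qed.

Lemma card_mid_le J : independent e J -> #|(J :\: V0) :\: star_x| <= #|V1|.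
Proof.
move=> /independentP indJ.
have midJ u : u \in (J :\: V0) :\: star_x -> u \in J /\ to_stem u \in V1.
  by rewrite !in_setD => /and3P[us u0 uJ]; rewrite to_stem_V1.
rewrite -(card_in_imset (f := to_stem)); last first.
  move=> u u' /midJ[uJ] + /midJ[u'J]; rewrite /to_stem.
  case lu: (is_leaf e u); case lu': (is_leaf e u') => // su _ eq_stem.
  - exact: stem_inj_V1.
  - by have := indJ _ _ uJ u'J; rewrite -eq_stem leaf_stem.
  - by have := indJ _ _ u'J uJ; rewrite eq_stem leaf_stem.
by apply/subset_leq_card/subsetP => _ /imsetP[u /midJ[_ su] ->].
Qed.

Lemma card_star_le J : independent e J -> #|J :&: star_x| <= 2.
Proof.
move=> /independentP indJ; case: (boolP (x \in J)) => xJ.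
  apply: (@leq_trans #|[set x]|); last by rewrite cards1.
  apply/subset_leq_card/subsetP => u; rewrite in_setI in_star_x inE.
  case/andP=> uJ /orP[// | /andP[lu /eqP sx]].
  by have := indJ _ _ xJ uJ; rewrite e_sym leaf_adj // sx eqxx.
rewrite -card_leaves_at_x; apply/subset_leq_card/subsetP => u.
by rewrite in_setI in_setU1 => /andP[uJ /predU1P[ux|//]]; rewrite -ux uJ in xJ.
Qed.

Lemma card_mid_ge J : maximal_indep_in e [set: T] J -> #|V1| <= #|(J :\: V0) :\: star_x|.
Proof.
move=> maxJ; apply: leq_trans (leq_imset_card to_stem _).
apply/subset_leq_card/subsetP => v v1; have [l ll lv] := V1_stem_witness v1.
have vx : v != x by apply: contraTneq v1 => ->; apply: x_notVtype.
case: (boolP (v \in J)) => vJ.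
  apply/imsetP; exists v; last by rewrite /to_stem (negbTE (Vtype_not_leaf v1)).
  rewrite !in_setD vJ in_star_x (negbTE vx) (negbTE (Vtype_not_leaf v1)) /=.
  by rewrite (contraL (@V0_notV1 v) v1).
apply/imsetP; exists l; last by rewrite /to_stem ll.
rewrite !in_setD in_star_x ll lv (negbTE vx) (maximal_leaf maxJ) ?lv // andbT /=.
rewrite (contraTN (@Vtype_not_leaf 0 l)) ?ll // andbT.
by rewrite orbF; apply: contraTneq ll => ->; apply: x_not_leaf.
Qed.

Lemma card_star_ge J : maximal_indep_in e [set: T] J ->
  (if x \in J then 1 else 2) <= #|J :&: star_x|.
Proof.
move=> maxJ; case: ifPn => xJ.
  by rewrite card_gt0; apply/set0Pn; exists x; rewrite in_setI xJ setU11.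
rewrite -card_leaves_at_x; apply/subset_leq_card/subsetP => u lu.
rewrite in_setI in_setU1 lu orbT andbT; move: lu; rewrite leaves_atE => /andP[lu /eqP sx].
by apply: maximal_leaf; rewrite ?sx.
Qed.

Lemma card_indep_le J : independent e J -> #|J| <= alpha e V0 + #|V1| + 2.
Proof.
move=> indJ; rewrite card_split_V0_star !leq_add ?card_mid_le ?card_star_le //.
exact/card_le_alpha/indep_inI.
Qed.

Definition free_leaves (I : {set T}) : {set T} :=
  [set u | is_leaf e u & stem u \in V1 :\: I].

Definition x_part (with_x : bool) : {set T} := if with_x then [set x] else leaves_at x.

Definition extension (I K : {set T}) (with_x : bool) : {set T} :=
  I :|: free_leaves I :|: x_part with_x :|: K.

Lemma card_free_leaves I : #|free_leaves I| = #|V1 :\: I|.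
Proof.
have -> : V1 :\: I = stem @: free_leaves I.
  apply/setP => v; apply/idP/imsetP => [vI | [u + ->]]; last by rewrite inE => /andP[].
  have [u lu uv] := V1_stem_witness (subsetP (subsetDl V1 I) v vI).
  by exists u; rewrite // inE lu uv.
apply/esym/card_in_imset => u u'; rewrite [u \in _]in_set [u' \in _]in_set.
move=> /andP[lu] + /andP[lu' _].
by rewrite in_setD => /andP[_ s1] su; apply: stem_inj_V1.
Qed.

Section Extension.
Variables (I K : {set T}) (with_x : bool).
Hypothesis indI : indep_in e V1 I.
Hypothesis I_avoids_x : with_x -> I :&: nbhd e x = set0.
Let K_domain := if with_x then V0 :\: nbhd_set e I :\: nbhd e x else V0 :\: nbhd_set e I.
Hypothesis maxK : maximal_indep_in e K_domain K.

Local Notation J := (extension I K with_x).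

Lemma mem_extension_I : {subset I <= J}.
Proof. by move=> u uI; rewrite !in_setU uI. Qed.

Lemma mem_extension_free : {subset free_leaves I <= J}.
Proof. by move=> u uL; rewrite !in_setU uL orbT. Qed.

Lemma mem_extension_x_part : {subset x_part with_x <= J}.
Proof. by move=> u uX; rewrite !in_setU uX orbT. Qed.

Lemma mem_extension_K : {subset K <= J}.
Proof. by move=> u uK; rewrite !in_setU uK orbT. Qed.

Lemma extension_I_V1 u : u \in I -> u \in V1.
Proof. by move: u; apply/subsetP; case/andP: indI. Qed.

Lemma K_in_domain u : u \in K ->
  [/\ u \in V0, u \notin nbhd_set e I & with_x -> u \notin nbhd e x].
Proof.
case/andP: maxK => /andP[/subsetP KS _] _ /KS.
rewrite /K_domain; case: ifPn => wx; rewrite !in_setD.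
  by case/and3P=> -> -> ->.
by case/andP=> -> ->.
Qed.

Lemma extension_nonleaf u : u \in J -> ~~ is_leaf e u ->
  [\/ u \in I, with_x /\ u = x | u \in K].
Proof.
move=> + nlu; rewrite !in_setU => /orP[/orP[/orP[uI|]|]|uK]; [exact: Or31 | | | exact: Or33].
  by rewrite inE (negbTE nlu).
rewrite /x_part; case: ifPn => [wx /set1P ux|_]; first exact: Or32.
by rewrite leaves_atE (negbTE nlu).
Qed.

Lemma extension_leaf_stem u : u \in J -> is_leaf e u -> stem u \notin J.
Proof.
move=> uJ lu; apply/negP => /extension_nonleaf/(_ (stem_not_leaf lu)).
move: uJ; rewrite !in_setU => /orP[/orP[/orP[/extension_I_V1/Vtype_not_leaf|]|]|/K_in_domain[]].
- by rewrite lu.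
- rewrite inE lu in_setD /= => /andP[sI s1] [sI'|[_ sx]|/K_in_domain[s0 _ _]].
  + by rewrite sI' in sI.
  + by rewrite sx (negbTE (x_notVtype _)) in s1.
  + by rewrite (negbTE (V0_notV1 s0)) in s1.
- rewrite /x_part; case: ifPn => [_ /set1P ux|wx].
    by rewrite ux (negbTE x_not_leaf) in lu.
  rewrite leaves_atE lu => /eqP-> [/extension_I_V1|[]|/K_in_domain[]]; rewrite ?(negbTE wx) //.
  + by move=> x1; case/negP: (@x_notVtype 1 isT).
  + by move=> x0; case/negP: (@x_notVtype 0 isT).
- by move/Vtype_not_leaf; rewrite lu.
Qed.

Lemma extension_indep : independent e J.
Proof.
have leaf_edge u v : u \in J -> v \in J -> is_leaf e u -> ~~ e u v.
  move=> uJ vJ lu; rewrite leaf_adj //.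
  by apply: contraNneq (extension_leaf_stem uJ lu) => <-.
apply/independentP => u v uJ vJ.
case: (boolP (is_leaf e u)) => [lu|nlu]; first exact: leaf_edge.
case: (boolP (is_leaf e v)) => [lv|nlv]; first by rewrite e_sym leaf_edge.
case/andP: indI => _ /independentP indI'.
case/andP: maxK => /andP[_ /independentP indK] _.
have I_x w : w \in I -> with_x -> ~~ e w x.
  by move=> wI /I_avoids_x/setP/(_ w); rewrite !inE wI e_sym => /negbT.
have I_K w w' : w \in I -> w' \in K -> ~~ e w w'.
  move=> wI /K_in_domain[_ + _]; apply: contra => ww'.
  by apply/nbhd_setP; exists w.
have x_K w : with_x -> w \in K -> ~~ e x w.
  by move=> wx /K_in_domain[_ _ /(_ wx)]; rewrite inE.
case: (extension_nonleaf uJ nlu) => [uI|[wx ->]|uK];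
  case: (extension_nonleaf vJ nlv) => [vI|[wx' ->]|vK].
- exact: indI'.
- exact: I_x.
- exact: I_K.
- by rewrite e_sym I_x.
- by rewrite e_irr.
- exact: x_K.
- by rewrite e_sym I_K.
- by rewrite e_sym x_K.
- exact: indK.
Qed.

Lemma extension_dominates_V0 y : y \in V0 -> y \notin J -> exists2 u, u \in J & e u y.
Proof.
move=> y0 yJ; case: (boolP (y \in nbhd_set e I)) => [/nbhd_setP[u uI uy]|yNI].
  by exists u; rewrite ?mem_extension_I.
case: (boolP (with_x && e x y)) => [/andP[wx xy]|not_xy].
  by exists x; rewrite // mem_extension_x_part // /x_part wx set11.
have yS : y \in K_domain.
  rewrite /K_domain; case: ifPn => wx; rewrite !in_setD y0 yNI ?andbT //.
  by rewrite wx /= in not_xy; rewrite inE.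
have [u uK uy] := maximal_dominates maxK yS (contra (@mem_extension_K y) yJ).
by exists u; rewrite ?mem_extension_K.
Qed.

Lemma extension_maximal : maximal_indep_in e [set: T] J.
Proof.
rewrite /maximal_indep_in /indep_in subsetT extension_indep.
apply/forall_inP => y; rewrite setTD inE => yJ; apply/exists_inP.
case: (vertex_cases y) => [y0|y1|yx|ly]; first exact: extension_dominates_V0.
- have [l ll ly] := V1_stem_witness y1; exists l; last by rewrite -ly leaf_stem.
  apply: mem_extension_free; rewrite inE ll ly in_setD y1 andbT.
  by apply: contra yJ => /mem_extension_I.
- have wx : ~~ with_x.
    by apply: contra yJ => wx; rewrite yx mem_extension_x_part // /x_part wx set11.
  have [l lx] : exists l, l \in leaves_at x by apply/set0Pn; rewrite -card_gt0 card_leaves_at_x.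
  exists l; first by rewrite mem_extension_x_part // /x_part (negbTE wx).
  by move: lx; rewrite inE yx e_sym => /andP[].
- case: (stem_cases ly) => [s1|sx].
    case: (boolP (stem y \in I)) => [sI|sNI].
      by exists (stem y); rewrite ?mem_extension_I // e_sym leaf_stem.
    by move: yJ; rewrite mem_extension_free // inE ly in_setD sNI s1.
  case/orP: (orbN with_x) => wx.
    exists x; last by rewrite -sx e_sym leaf_stem.
    by rewrite mem_extension_x_part // /x_part wx set11.
  by move: yJ; rewrite mem_extension_x_part // /x_part (negbTE wx) leaves_atE ly sx eqxx.
Qed.

Lemma card_extension : #|J| = #|V1| + (if with_x then 1 else 2) + #|K|.
Proof.
have IV1 : I \subset V1 by case/andP: indI.
have KV0 u : u \in K -> u \in V0 by case/K_in_domain.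
have x_partP u : u \in x_part with_x -> u = x \/ is_leaf e u /\ stem u = x.
  rewrite /x_part; case: with_x => [/set1P|]; first by left.
  by rewrite leaves_atE => /andP[? /eqP]; right.
rewrite !cardsU_disjoint.
- rewrite card_free_leaves -(cardsID I V1) (setIidPr IV1).
  by clear x_partP; rewrite /x_part; case: with_x; rewrite ?cards1 ?card_leaves_at_x.
- by move=> u /(subsetP IV1) u1; rewrite inE negb_and (Vtype_not_leaf u1).
- move=> u; rewrite in_setU => /orP[/(subsetP IV1) u1|].
    apply/negP => /x_partP[ux|[lu _]]; first by rewrite ux (negbTE (x_notVtype _)) in u1.
    by rewrite (negbTE (Vtype_not_leaf u1)) in lu.
  rewrite inE => /andP[lu]; rewrite in_setD => /andP[_ s1]; apply/negP => /x_partP[ux|[_ sx]].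
    by rewrite ux (negbTE x_not_leaf) in lu.
  by rewrite sx (negbTE (x_notVtype _)) in s1.
- move=> u; rewrite !in_setU => /orP[/orP[/(subsetP IV1) u1|]|].
  + by apply: contraL u1 => /KV0/V0_notV1.
  + by rewrite inE => /andP[lu _]; apply: contraL lu => /KV0/Vtype_not_leaf.
  + case/x_partP => [->|[lu _]]; apply/negP => /KV0; first exact/negP/x_notVtype.
    by move/Vtype_not_leaf; rewrite lu.
Qed.

End Extension.

Lemma alpha_total : alpha e [set: T] = alpha e V0 + #|V1| + 2.
Proof.
apply/eqP; rewrite eqn_leq; apply/andP; split.
  by apply/bigmax_leqP => J /andP[_ indJ]; apply: card_indep_le.
have [K indK cardK] := alpha_witness e V0.
have maxK : maximal_indep_in e (V0 :\: nbhd_set e set0) K.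
  by rewrite nbhd_set0 setD0; apply: maximum_indep_maximal; rewrite ?cardK.
have maxJ := extension_maximal (with_x := false) (indep_in0 e V1) (fun _ => set0I _) maxK.
apply: leq_trans (card_le_alpha (andP maxJ).1).
by rewrite (card_extension (with_x := false) (indep_in0 e V1) maxK) -cardK [leqRHS]addnC addnA.
Qed.

Lemma imin_total_le : imin e [set: T] <= alpha e V0 + #|V1| + 1.
Proof.
have [K maxK _] :=
  maximal_indep_in_superset e_sym e_irr (indep_in0 e (V0 :\: nbhd_set e set0 :\: nbhd e x)).
have maxJ := extension_maximal (with_x := true) (indep_in0 e V1) (fun _ => set0I _) maxK.
apply: leq_trans (imin_le_card maxJ) _.
rewrite (card_extension (with_x := true) (indep_in0 e V1) maxK) addnC addnA leq_add2r leq_add2r.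
apply: leq_trans (card_le_alpha (andP maxK).1) (alphaS e _).
by rewrite nbhd_set0 setD0 subsetDl.
Qed.

Lemma almost_well_covered_iff_imin_large :
  almost_well_covered e [set: T] <-> alpha e V0 + #|V1| + 1 <= imin e [set: T].
Proof.
rewrite /almost_well_covered alpha_total; have := imin_total_le.
by split=> ?; lia.
Qed.

Section SecondNeighbours.
Variable v : T.
Hypothesis xv : e x v.

Let W := nbhd e v :&: V0.
Let z := other_nb v.

Lemma second_nbP w : w \in W -> [/\ e v w, w \in V0, e w (z w) & z w != v].
Proof.
rewrite in_setI inE => /andP[vw w0]; have wU : w \notin U.
  by rewrite -(Uset_edge e_sym vw) -(Uset_edge e_sym xv) x_notU.
have wi : is_internal e w by move: w0; rewrite inE is_typeE (negbTE wU) => /andP[].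
by have /andP[wz zv] := other_nbP wi vw.
Qed.

Lemma second_nb_not_x_nb w : w \in W -> (z w != x) && ~~ e x (z w).
Proof.
case/second_nbP => vw w0 wz zv; apply/andP; split.
  by apply: contraTneq wz => ->; apply/negP => wx; apply: (no_triangle e_irr e_girth xv vw wx).
apply/negP => xz; apply: (no_4cycle e_irr e_girth xv vw wz); first by rewrite e_sym.
  by apply: contraTneq w0 => <-; apply: x_notVtype.
by rewrite eq_sym.
Qed.

Lemma second_nb_V01 w : w \in W -> (z w \in V0) || (z w \in V1).
Proof.
move=> wW; have [_ w0 wz _] := second_nbP wW.
case: (vertex_cases (z w)) => [->|->|zx|lz]; rewrite ?orbT //.
  by have /andP[/eqP] := second_nb_not_x_nb wW.
by have := V0_leaf_free w0 lz; rewrite wz.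
Qed.

(* An edge between two second neighbours would close a cycle of length at most 5 through v. *)
Lemma second_nbs_indep : independent e (z @: W).
Proof.
apply/independentP => _ _ /imsetP[w wW ->] /imsetP[w' w'W ->]; apply/negP => zz.
have [vw _ wz zv] := second_nbP wW; have [vw' _ wz' zv'] := second_nbP w'W.
have [ww'|ww'] := eqVneq w w'; first by rewrite ww' e_irr in zz.
have [zw'|zw'] := eqVneq (z w) w'.
  by rewrite zw' in wz; apply: (no_triangle e_irr e_girth vw wz); rewrite e_sym.
have [z'w|z'w] := eqVneq (z w') w.
  by rewrite z'w in wz'; apply: (no_triangle e_irr e_girth vw' wz'); rewrite e_sym.
by apply: (no_5cycle e_irr e_girth vw wz zz _ _ _ _ _ ww' zw'); rewrite 1?e_sym 1?eq_sym.
Qed.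

Lemma second_nbs_extend (K : {set T}) : v \in V0 -> indep_in e V0 K ->
  (z @: W) :&: V0 \subset K -> {in K, forall u, u \notin nbhd_set e ((z @: W) :&: V1)} ->
  indep_in e V0 (v |: K).
Proof.
move=> v0 indK ZK KNZ; apply: (indep_inU1 e_sym e_irr) => // u uK; apply/negP => uv.
have uW : u \in W by rewrite in_setI inE e_sym uv (subsetP (andP indK).1).
have [_ _ uz _] := second_nbP uW; have zZ : z u \in z @: W by apply: imset_f.
case/orP: (second_nb_V01 uW) => [z0|z1].
  have zK : z u \in K by apply: (subsetP ZK); rewrite in_setI zZ z0.
  by case/andP: indK => _ /independentP/(_ u _ uK zK); rewrite uz.
by case/negP: (KNZ u uK); apply/nbhd_setP; exists (z u); rewrite ?in_setI ?zZ // e_sym.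
Qed.

End SecondNeighbours.

Lemma V0_setD_nbhd_x (A : {set T}) :
  nbhd e x :&: V0 = set0 -> V0 :\: A :\: nbhd e x = V0 :\: A.
Proof.
move=> NxV0; apply/setDidPl; rewrite -setI_eq0 setIC -subset0 -NxV0.
by apply: setIS; apply: subsetDl.
Qed.

Section LargeImin.
Hypothesis imin_large : alpha e V0 + #|V1| + 1 <= imin e [set: T].

Lemma alpha_V0_le_with_x (I K : {set T}) : indep_in e V1 I -> I :&: nbhd e x = set0 ->
  maximal_indep_in e (V0 :\: nbhd_set e I :\: nbhd e x) K -> alpha e V0 <= #|K|.
Proof.
move=> indI Ix maxK.
have maxJ := extension_maximal (with_x := true) indI (fun _ => Ix) maxK.
have := leq_trans imin_large (imin_le_card maxJ).
by rewrite (card_extension (with_x := true) indI maxK); lia.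
Qed.

Lemma alpha_V0_le_without_x (I K : {set T}) : indep_in e V1 I ->
  maximal_indep_in e (V0 :\: nbhd_set e I) K -> alpha e V0 <= #|K| + 1.
Proof.
move=> indI maxK; have no_x : false -> I :&: nbhd e x = set0 by [].
have maxJ := extension_maximal indI no_x maxK.
have := leq_trans imin_large (imin_le_card maxJ).
by rewrite (card_extension (with_x := false) indI maxK); lia.
Qed.

Lemma nbhd_x_V0_empty : nbhd e x :&: V0 = set0.
Proof.
apply/setP => v; rewrite in_set0 in_setI inE; apply/negP => /andP[xv v0].
set Z := other_nb v @: (nbhd e v :&: V0).
have indZ : independent e Z := second_nbs_indep xv.
have Z_not_x_nb w : w \in Z -> ~~ e x w.
  by case/imsetP=> w' wW ->; case/andP: (second_nb_not_x_nb xv wW).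
set I := Z :&: V1.
have indI : indep_in e V1 I := indep_inI V1 indZ.
have Ix : I :&: nbhd e x = set0.
  apply/setP => w; rewrite in_set0 !in_setI.
  case: (boolP (w \in Z)) => //= /Z_not_x_nb xw.
  by rewrite [w \in nbhd e x]inE (negbTE xw) andbF.
have indS : indep_in e (V0 :\: nbhd_set e I :\: nbhd e x) (Z :&: V0).
  rewrite /indep_in (independentS (subsetIl _ _) indZ) andbT; apply/subsetP => w.
  rewrite in_setI => /andP[wZ w0]; rewrite !in_setD w0 inE Z_not_x_nb //= andbT.
  apply/negP => /nbhd_setP[i]; rewrite in_setI => /andP[iZ _]; apply/negP.
  by move/independentP: indZ; apply.
have [K maxK SK] := maximal_indep_in_superset e_sym e_irr indS.
have /andP[/andP[/subsetP KS indK] _] := maxK.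
have K_V0 u : u \in K -> u \notin nbhd_set e I /\ u \in V0.
  by move/KS; rewrite !in_setD => /and3P[_ -> ->].
have vK : v \notin K by apply/negP => /KS; rewrite in_setD inE xv.
have indvK : indep_in e V0 (v |: K).
  apply: (second_nbs_extend xv v0 _ SK) => [|u /K_V0[] //].
  by rewrite /indep_in indK andbT; apply/subsetP => u /K_V0[].
have := card_le_alpha indvK; rewrite cardsU1 vK.
by have := alpha_V0_le_with_x indI Ix maxK; lia.
Qed.

Lemma alpha_V0_eq_imin I : indep_in e V1 I -> I :&: nbhd e x = set0 ->
  alpha e V0 = imin e (V0 :\: nbhd_set e I).
Proof.
move=> indI Ix; apply/eqP; rewrite eqn_leq; apply/andP; split.
  apply: leq_imin => [|K maxK]; first exact: alpha_le_cardT.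
  by apply: alpha_V0_le_with_x indI Ix _; rewrite V0_setD_nbhd_x // nbhd_x_V0_empty.
exact: leq_trans (imin_le_alpha e_sym e_irr _) (alphaS e (subsetDl _ _)).
Qed.

Lemma alpha_V0_sub_imin_le1 I : indep_in e V1 I -> alpha e V0 - imin e (V0 :\: nbhd_set e I) <= 1.
Proof.
move=> indI; suff : alpha e V0 - 1 <= imin e (V0 :\: nbhd_set e I) by lia.
apply: leq_imin => [|K maxK]; first exact: leq_trans (leq_subr _ _) (alpha_le_cardT e _).
by have := alpha_V0_le_without_x indI maxK; lia.
Qed.

End LargeImin.

Lemma maximal_trace_V0 J : nbhd e x :&: V0 = set0 -> maximal_indep_in e [set: T] J ->
  maximal_indep_in e (V0 :\: nbhd_set e (J :&: V1)) (J :&: V0).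
Proof.
move=> NxV0 maxJ; have /andP[/andP[_ indJ] _] := maxJ.
rewrite /maximal_indep_in /indep_in (independentS (subsetIl _ _) indJ) andbT.
apply/andP; split.
  apply/subsetP => k /setIP[kJ k0]; rewrite in_setD k0 andbT.
  apply/negP => /nbhd_setP[u /setIP[uJ _] uk].
  by move/independentP: indJ => /(_ u k uJ kJ); rewrite uk.
apply/forall_inP => y; rewrite !in_setD in_setI => /and3P[yK yNI y0].
have yJ : y \notin J by move: yK; rewrite y0 andbT.
have [u uJ uy] := maximal_dominates maxJ (in_setT y) yJ.
apply/exists_inP; exists u => //; rewrite in_setI uJ /=.
case: (vertex_cases u) => [//|u1|ux|lu].
- by case/negP: yNI; apply/nbhd_setP; exists u; rewrite // in_setI uJ.
- move/setP/(_ y): NxV0.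
  by rewrite in_setI [y \in nbhd e x]inE -ux uy y0 in_set0.
- by have := V0_leaf_free y0 lu; rewrite e_sym uy.
Qed.

Lemma imin_large_of_conditions :
  nbhd e x :&: V0 = set0 ->
  (forall I : {set T}, indep_in e V1 I ->
     (I :&: nbhd e x = set0 -> alpha e V0 = imin e (V0 :\: nbhd_set e I)) /\
     (I :&: nbhd e x != set0 -> alpha e V0 - imin e (V0 :\: nbhd_set e I) <= 1)) ->
  alpha e V0 + #|V1| + 1 <= imin e [set: T].
Proof.
move=> NxV0 conds; apply: leq_imin => [|J maxJ].
  by have := alpha_le_cardT e [set: T]; rewrite alpha_total; lia.
have /andP[/andP[_ indJ] _] := maxJ.
set I := J :&: V1; have indI : indep_in e V1 I := indep_inI V1 indJ.
have imin_K : imin e (V0 :\: nbhd_set e I) <= #|J :&: V0|.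
  exact: imin_le_card (maximal_trace_V0 NxV0 maxJ).
have [condA condB] := conds I indI.
have := card_star_ge maxJ; have := card_mid_ge maxJ; rewrite [#|J|]card_split_V0_star.
case: ifPn => xJ.
  have Ix : I :&: nbhd e x = set0.
    apply/setP => u; rewrite in_set0 in_setI [u \in nbhd e x]inE.
    apply/negP => /andP[/setIP[uJ _] xu].
    by move/independentP: indJ => /(_ x u xJ uJ); rewrite xu.
  by have := condA Ix; lia.
have : alpha e V0 <= imin e (V0 :\: nbhd_set e I) + 1.
  by case: (eqVneq (I :&: nbhd e x) set0) => [/condA -> | /condB]; lia.
lia.
Qed.

End UniqueType2Vertex.
End TypedVertices.

Theorem theorem16 (T : finType) (e : rel T) (x : T) :
  simple_graph e ->
  girth_ge6 e ->
  is_type e 2 x ->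
  (forall y, is_type e 2 y -> y = x) ->
  (forall (k : nat) y, 3 <= k -> ~~ is_type e k y) ->
  (almost_well_covered e [set: T] <->
   [/\ (forall y, is_internal e y -> y != x -> is_type e 0 y \/ is_type e 1 y),
       nbhd e x :&: Vtype e 0 = set0,
       well_covered e (Vtype e 0) &
       (forall I : {set T}, indep_in e (Vtype e 1) I ->
          (I :&: nbhd e x = set0 ->
             alpha e (Vtype e 0) = imin e (Vtype e 0 :\: nbhd_set e I)) /\
          (I :&: nbhd e x != set0 ->
             alpha e (Vtype e 0) - imin e (Vtype e 0 :\: nbhd_set e I) <= 1))]).
Proof.
move=> [e_sym e_irr] e_girth x_type2 x_unique no_type_ge3.
rewrite (almost_well_covered_iff_imin_large e_sym (x := x)) //.
split=> [large | [_ NxV0 _ conds]]; last exact: (imin_large_of_conditions e_sym (x := x)).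
have alpha_eq I : indep_in e (Vtype e 1) I -> I :&: nbhd e x = set0 ->
    alpha e (Vtype e 0) = imin e (Vtype e 0 :\: nbhd_set e I).
  by move=> indI Ix; apply: (alpha_V0_eq_imin e_sym (x := x)).
split=> [y yi yx | | | I indI].
- exact: (internal_type01 x_unique no_type_ge3 yi yx).
- exact: (nbhd_x_V0_empty e_sym (x := x)).
- by have := alpha_eq _ (indep_in0 e _) (set0I _); rewrite nbhd_set0 setD0.
- by split=> [|_]; [apply: alpha_eq | apply: (alpha_V0_sub_imin_le1 e_sym (x := x))].
Qed.
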